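(* Let $G$ be a finite group. If $OD(G)$ contains a cycle, then the girth of $OD(G)$ equals $3$.
   Context: For a finite group $G$, $o(x)$ denotes the order of $x\in G$. The order-divisor graph $OD(G)$ is the simple undirected graph with vertex set $G$, in which two distinct vertices $x,y$ are adjacent if and only if $o(x)\neq o(y)$ and either $o(x)\mid o(y)$ or $o(y)\mid o(x)$. The girth $g(\Gamma)$ of a graph $\Gamma$ is the length of a shortest cycle in $\Gamma$. *)

From mathcomp Require Import all_boot all_fingroup.
Set Implicit Arguments. Unset Strict Implicit. Unset Printing Implicit Defensive.

Local Open Scope group_scope.

Definition od_adj (gT : finGroupType) : rel gT :=
  fun x y => [&& x != y, #[x] != #[y] & (#[x] %| #[y]) || (#[y] %| #[x])].

(* Its length is the number of vertices (= number of edges). *)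
Definition od_cycle (gT : finGroupType) (G : {group gT}) (s : seq gT) : Prop :=
  [/\ 3 <= size s, uniq s, all (fun x => x \in G) s & path.cycle (@od_adj gT) s].

Definition od_girth_is (gT : finGroupType) (G : {group gT}) (n : nat) : Prop :=
  (exists2 s, od_cycle G s & size s = n) /\
  (forall s, od_cycle G s -> n <= size s).

(* The identity has order 1, which divides every order, so it is adjacent to
   every other vertex. A cycle visits at least three distinct vertices, so it
   has an edge x -- y avoiding the identity, and then 1, x, y is a triangle. *)
From mathcomp Require Import all_boot all_fingroup.
Set Implicit Arguments. Unset Strict Implicit. Unset Printing Implicit Defensive.

Lemma cycle_edge_avoid (T : eqType) (e : rel T) (s : seq T) (v : T) :
    uniq s -> 3 <= size s -> path.cycle e s ->
  exists x y, [/\ x \in s, y \in s, x != v, y != v & e x y].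
Proof.
(* On a uniq cycle, [prev s v] is the only vertex whose successor is [v]. *)
move=> uniq_s size_s cycle_s; set w := prev s v.
have [x x_s /andP[xNv xNw]] : exists2 x, x \in s & (x != v) && (x != w).
  apply/hasP; apply: contraTT size_s => /hasPn s_vw; rewrite -leqNgt.
  apply: (@uniq_leq_size _ s [:: v; w]) => // x /s_vw.
  by rewrite !inE negb_and !negbK orbC.
exists x, (next s x); split=> //; first by rewrite mem_next.
  by apply: contraNneq xNw => xv; rewrite /w -xv prev_next.
exact: next_cycle.
Qed.

Local Open Scope group_scope.

Section OrderDivisorGraph.

Variable gT : finGroupType.

Lemma od_adj_sym : symmetric (@od_adj gT).
Proof. by move=> x y; rewrite /od_adj eq_sym [#[x] == _]eq_sym orbC. Qed.

Lemma od_adj1g (x : gT) : x != 1 -> od_adj 1 x.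
Proof. by move=> xN1; rewrite /od_adj eq_sym xN1 order1 eq_sym order_eq1 xN1 dvd1n. Qed.

Lemma od_cycle_triangle (G : {group gT}) (x y : gT) :
  x \in G -> y \in G -> x != 1 -> y != 1 -> od_adj x y -> od_cycle G [:: 1; x; y].
Proof.
move=> xG yG xN1 yN1 xy; have /and3P[xNy _ _] := xy.
split=> //=; first by rewrite !inE negb_or !(eq_sym 1) xN1 yN1 xNy.
  by rewrite group1 xG yG.
by rewrite od_adj1g // xy od_adj_sym od_adj1g.
Qed.

End OrderDivisorGraph.

Theorem mainTheorem3 (gT : finGroupType) (G : {group gT}) :
  (exists s, od_cycle G s) -> od_girth_is G 3.
Proof.
case=> s [size_s uniq_s /allP sG cycle_s]; split; last by move=> t [].
have [x [y [x_s y_s xN1 yN1 xy]]] := cycle_edge_avoid 1 uniq_s size_s cycle_s.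
by exists [:: 1; x; y]; first exact: od_cycle_triangle (sG x x_s) (sG y y_s) _ _ _.
Qed.
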